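(* Let $k$ be a field and $\mathcal{B}=\bigoplus_{p\in\mathbb{Z}}\mathcal{B}_p$ a connected graded associative unital $k$-algebra ($\mathcal{B}_{-n}=0$ for $n>0$, $\mathcal{B}_0=k$), with $V:=\mathcal{B}_1$ finite dimensional, and assume $\mathcal{B}$ is generated by $V$, i.e. $\mathcal{B}=TV/(R)$ with $R$ a homogeneous subspace. Let $A_{gr}(\mathcal{B}):=A_{gr}(u,m)$ where $u:k\to\mathcal{B}$ is the unit and $m:\mathcal{B}\otimes\mathcal{B}\to\mathcal{B}$ the multiplication. Then $A_{gr}(\mathcal{B})$ is generated as an algebra by $C_1=\mathrm{End}(V)^*$; that is, the map $T(C_1)\hookrightarrow T(C_{gr})\to A_{gr}(\mathcal{B})$ is surjective.
   Context: For a graded vector space $W=\bigoplus_{p\in\mathbb{Z}}W_p$ with every $W_p$ finite dimensional, set $C_p=\mathrm{End}(W_p)^*$ and $C_{gr}=\bigoplus_p C_p$; with a basis $\{x^{(p)}_i\}$ of $W_p$, $C_p$ has the dual (comatrix) basis $\{t^{(p)}{}_i^j\}$ with $\Delta(t^{(p)}{}_i^j)=\sum_k t^{(p)}{}_i^k\otimes t^{(p)}{}_k^j$, $\epsilon(t^{(p)}{}_i^j)=\delta_i^j$, and $W$ is a graded $C_{gr}$-comodule via $\rho(x^{(p)}_i)=\sum_j t^{(p)}{}_i^j\otimes x^{(p)}_j$. $T(C_{gr})$ is the tensor algebra with the bialgebra structure extending that of $C_{gr}$, so all $W^{\otimes n}$ are $T(C_{gr})$-comodules (with $W^{\otimes0}=k$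 trivial). For a family $F$ of linear maps $f:W^{\otimes n}\to W^{\otimes m}$, $\mathcal{I}_F$ is the ideal of $T(C_{gr})$ generated by the coefficients (in a basis of $W^{\otimes m}$) of $(\mathrm{id}\otimes f)\rho(z)-\rho(f(z))$ for $z$ running over basis tensors of $W^{\otimes n}$, $f\in F$; $A_{gr}(F)=T(C_{gr})/\mathcal{I}_F$ is a bialgebra and $W$ is a graded $A_{gr}(F)$-comodule with all $f\in F$ colinear. Here $W=\mathcal{B}$ and $C_1=\mathrm{End}(\mathcal{B}_1)^*$. *)

From HB Require Import structures.
From mathcomp Require Import all_boot all_order all_algebra.
Set Implicit Arguments. Unset Strict Implicit. Unset Printing Implicit Defensive.
Import Order.TTheory GRing.Theory.
Local Open Scope ring_scope.

(* Basis indices of a graded space W = (+)_p W_p with dim W_p = d p: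
   (p, i) stands for x^(p)_i, valid when i < d p.  (Degrees p < 0 carry
   the zero space, so only p : nat is needed.) *)
Definition bidx := (nat * nat)%type.
Definition validX (d : nat -> nat) (x : bidx) : bool := (x.2 < d x.1)%N.

(* Generators of T(C_gr): (p, i, j) stands for t^(p)_i^j, valid when
   i, j < d p.  *)
Definition gen := (nat * nat * nat)%type.
Definition validG (d : nat -> nat) (g : gen) : bool :=
  (g.1.2 < d g.1.1)%N && (g.2 < d g.1.1)%N.

(* Elements of a free associative algebra on generators G, represented as
   formal finite sums of (coefficient, word); two representatives are equal
   as elements iff they have the same coefficient function [ncoef]. *)
Definition ncpoly (K : Type) (G : Type) := seq (K * seq G).

Section NC.
Variables (K : pzRingType) (G : eqType).
Definition ncoef (P : ncpoly K G) (w : seq G) : K :=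
  \sum_(t <- P) (if t.2 == w then t.1 else 0).
Definition nadd (P Q : ncpoly K G) : ncpoly K G := P ++ Q.
Definition nopp (P : ncpoly K G) : ncpoly K G := [seq (- t.1, t.2) | t <- P].
Definition nmul (P Q : ncpoly K G) : ncpoly K G :=
  [seq (a.1 * b.1, a.2 ++ b.2) | a <- P, b <- Q].
End NC.

(* Words of T(C_gr) occurring in the comodule structure:
   tword z w = t^{p1}_{z1}^{w1} ... t^{pn}_{zn}^{wn}  (z, w of same degrees). *)
Definition tword (z w : seq bidx) : seq gen :=
  [seq (ab.1.1, ab.1.2, ab.2.2) | ab <- zip z w].

Fixpoint enumDeg (d : nat -> nat) (ps : seq nat) : seq (seq bidx) :=
  match ps with
  | [::] => [:: [::]]
  | p :: ps' => [seq (p, i) :: w | i <- iota 0 (d p), w <- enumDeg d ps']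
  end.

Definition validT (d : nat -> nat) (n : nat) (z : seq bidx) : bool :=
  (size z == n) && all (validX d) z.

(* A linear map f : W^{(x)n} -> W^{(x)m}, given by its matrix:
   lmat v w = coefficient of the basis tensor v in f(w). *)
Record lmap (K : Type) := LMap {
  ldom : nat; lcod : nat; lmat : seq bidx -> seq bidx -> K }.

Section Ideal.
Variables (K : pzRingType) (d : nat -> nat).

(* Coefficient at the basis tensor v of (id (x) f) rho(z) - rho(f(z)), where
   rho(z) = sum_{w} tword z w (x) w. *)
Definition relpoly (f : lmap K) (z v : seq bidx) : ncpoly K gen :=
  [seq (lmat f v w, tword z w) | w <- enumDeg d (map fst z)] ++
  [seq (- lmat f y z, tword y v) | y <- enumDeg d (map fst v)].

Definition validpoly (P : ncpoly K gen) : bool :=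
  all (fun t => all (validG d) t.2) P.

Definition lmap0 : lmap K := LMap 0 0 (fun _ _ => 0).

(* P lies in the two-sided ideal I_F of T(C_gr) generated by all relpoly's. *)
Definition inIdeal (F : seq (lmap K)) (P : ncpoly K gen) : Prop :=
  exists L : seq (ncpoly K gen * nat * seq bidx * seq bidx * ncpoly K gen),
    all (fun e =>
      let: (a, k, z, v, b) := e in
      [&& validpoly a, validpoly b, (k < size F)%N,
          validT d (ldom (nth lmap0 F k)) z &
          validT d (lcod (nth lmap0 F k)) v]) L /\
    forall w, ncoef P w =
      ncoef (flatten [seq let: (a, k, z, v, b) := e in
                          nmul (nmul a (relpoly (nth lmap0 F k) z v)) b
                     | e <- L]) w.

(* P lies in the image of T(C_1): only generators t^(1)_i^j occur. *)
Definition inTC1 (P : ncpoly K gen) : bool :=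
  all (fun t => all (fun g => validG d g && (g.1.1 == 1%N)) t.2) P.
End Ideal.

(* The unit u : k -> B and multiplication m : B (x) B -> B of a graded
   algebra B with homogeneous basis x and coordinate functionals crd. *)
Definition unit_lmap (K : fieldType) (B : algType K)
  (crd : B -> nat -> nat -> K) : lmap K :=
  LMap 0 1 (fun v w => match w, v with
                       | [::], [:: y] => crd 1 y.1 y.2
                       | _, _ => 0 end).

Definition mult_lmap (K : fieldType) (B : algType K) (x : nat -> nat -> B)
  (crd : B -> nat -> nat -> K) : lmap K :=
  LMap 2 1 (fun v w => match w, v with
                       | [:: a; b], [:: y] => crd (x a.1 a.2 * x b.1 b.2) y.1 y.2
                       | _, _ => 0 end).

(* Modulo I, every generator t^(p)_i^j of T(C_gr) is congruent to an element
   of T(C_1); this is shown by induction on p, and products and linear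
   combinations then take care of all of T(C_gr).  For p = 0 the relation of
   the unit gives c (1 - t^(0)_0^0) in I, where c is the coordinate of 1 in
   B_0 = k, so c <> 0.  For p = q + 1, generation by V gives B_(q+1) = V B_q,
   so x^(q+1)_i = sum c_kl x^(1)_k x^(q)_l; summing the relations of the
   multiplication at (x^(1)_k (x) x^(q)_l, x^(q+1)_j) with these coefficients
   expresses t^(q+1)_i^j, modulo I, through the products t^(1)_k^a t^(q)_l^b. *)

From HB Require Import structures.
From mathcomp Require Import all_boot all_order all_algebra.
Import GRing.Theory.
Local Open Scope ring_scope.
Set Implicit Arguments. Unset Strict Implicit. Unset Printing Implicit Defensive.

Lemma sum_take_drop_eq (T : eqType) (u v w : seq T) :
  (\sum_(i < (size w).+1) ((take i w == u) && (drop i w == v)) = (u ++ v == w))%N.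
Proof.
have [<-|neq_w] := eqVneq (u ++ v) w; last first.
  rewrite big1 // => i _; apply/eqP; rewrite eqb0; apply: contra neq_w.
  by case/andP=> /eqP <- /eqP <-; rewrite cat_take_drop.
have lt_u : (size u < (size (u ++ v)).+1)%N by rewrite size_cat ltnS leq_addr.
rewrite (bigD1 (Ordinal lt_u)) //= take_size_cat // drop_size_cat // !eqxx.
rewrite big1 // => i /eqP neq_i; apply/eqP; rewrite eqb0; apply/negP.
case/andP=> /eqP take_i _; apply: neq_i; apply: val_inj => /=.
have := ltn_ord i; rewrite ltnS => le_i.
by move: (size_takel le_i); rewrite take_i.
Qed.

Section NCPoly.
Variables (K : pzRingType) (G : eqType).
Implicit Types (P Q A : ncpoly K G) (u w : seq G).

Definition nword u : ncpoly K G := [:: (1, u)].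
Definition nscale (c : K) P : ncpoly K G := [seq (c * t.1, t.2) | t <- P].
Definition nsum (I : finType) (f : I -> ncpoly K G) : ncpoly K G :=
  flatten [seq f i | i <- index_enum I].

Lemma ncoefE P w : ncoef P w = \sum_(t <- P) t.1 * (t.2 == w)%:R.
Proof. by apply: eq_bigr => t _; case: eqP; rewrite ?mulr1 ?mulr0. Qed.

Lemma ncoef0 w : ncoef ([::] : ncpoly K G) w = 0.
Proof. exact: big_nil. Qed.

Lemma ncoefD P Q w : ncoef (nadd P Q) w = ncoef P w + ncoef Q w.
Proof. exact: big_cat. Qed.

Lemma ncoefN P w : ncoef (nopp P) w = - ncoef P w.
Proof. by rewrite !ncoefE big_map -sumrN; apply: eq_bigr => t _; rewrite mulNr. Qed.

Lemma ncoefZ c P w : ncoef (nscale c P) w = c * ncoef P w.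
Proof. by rewrite !ncoefE big_map mulr_sumr; apply: eq_bigr => t _; rewrite mulrA. Qed.

Lemma ncoef_word u w : ncoef (nword u) w = (u == w)%:R.
Proof. by rewrite ncoefE big_seq1 mul1r. Qed.

Lemma ncoef_flatten (Ps : seq (ncpoly K G)) w :
  ncoef (flatten Ps) w = \sum_(P <- Ps) ncoef P w.
Proof. exact: big_flatten. Qed.

Lemma ncoef_sum (I : finType) (f : I -> ncpoly K G) w :
  ncoef (nsum f) w = \sum_i ncoef (f i) w.
Proof. by rewrite ncoef_flatten big_map. Qed.

Lemma ncoefM A P w :
  ncoef (nmul A P) w =
  \sum_(i < (size w).+1) ncoef A (take i w) * ncoef P (drop i w).
Proof.
under [RHS]eq_bigr do rewrite !ncoefE big_distrl; rewrite exchange_big /=.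
rewrite ncoefE big_allpairs_dep; apply: eq_bigr => a _ /=.
under [RHS]eq_bigr do rewrite big_distrr; rewrite exchange_big /=.
apply: eq_bigr => b _ /=; rewrite -sum_take_drop_eq natr_sum mulr_sumr.
apply: eq_bigr => i _.
symmetry; rewrite -mulrA (mulrA _%:R) -(commr_nat b.1) -!mulrA -natrM mulnb.
by rewrite eq_sym [b.2 == _]eq_sym.
Qed.

Lemma nscale_mul c P : nscale c P = nmul [:: (c, [::])] P.
Proof. by rewrite /nmul /= cats0. Qed.

Lemma nword_cat u v : nword (u ++ v) = nmul (nword u) (nword v).
Proof. by rewrite /nmul /= mulr1. Qed.

Lemma nmul1r P : nmul (nword [::]) P = P.
Proof. by rewrite -[RHS]map_id /nmul /= cats0; apply: eq_map => -[a u] /=; rewrite mul1r. Qed.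

Lemma nmulr1 P : nmul P (nword [::]) = P.
Proof. by elim: P => // -[a u] P IHP; rewrite /nmul /= mulr1 cats0 -[in RHS]IHP. Qed.

Lemma ncoefM_ext A A' P P' : ncoef A =1 ncoef A' -> ncoef P =1 ncoef P' ->
  ncoef (nmul A P) =1 ncoef (nmul A' P').
Proof. by move=> eqA eqP w; rewrite !ncoefM; apply: eq_bigr => i _; rewrite eqA eqP. Qed.

Lemma ncoef_mulA A P Q : ncoef (nmul (nmul A P) Q) =1 ncoef (nmul A (nmul P Q)).
Proof.
move=> w; rewrite /ncoef /nmul !big_allpairs_dep /=; apply: eq_bigr => a _.
rewrite big_allpairs_dep; apply: eq_bigr => b _; apply: eq_bigr => c _ /=.
by rewrite catA mulrA.
Qed.

Lemma ncoef_mul_flattenr A (Ps : seq (ncpoly K G)) w :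
  ncoef (nmul A (flatten Ps)) w = \sum_(P <- Ps) ncoef (nmul A P) w.
Proof.
under eq_bigr do rewrite ncoefM.
by rewrite exchange_big ncoefM; apply: eq_bigr => i _; rewrite ncoef_flatten mulr_sumr.
Qed.

Lemma ncoef_mul_flattenl A (Ps : seq (ncpoly K G)) w :
  ncoef (nmul (flatten Ps) A) w = \sum_(P <- Ps) ncoef (nmul P A) w.
Proof.
under eq_bigr do rewrite ncoefM.
by rewrite exchange_big ncoefM; apply: eq_bigr => i _; rewrite ncoef_flatten mulr_suml.
Qed.

End NCPoly.
Arguments nword {K G} u.

Section Ideal.
Variables (K : pzRingType) (d : nat -> nat) (F : seq (lmap K)).
Implicit Types (P Q A : ncpoly K gen).
Local Notation I := (inIdeal d F).

Lemma validpolyM A P : validpoly d A -> validpoly d P -> validpoly d (nmul A P).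
Proof.
move=> /allP validA /allP validP; apply/allP => _ /allpairsP[[a b] [Aa Pb ->]] /=.
by rewrite all_cat validA ?validP.
Qed.

Lemma inIdeal_ext P P' : ncoef P =1 ncoef P' -> I P -> I P'.
Proof. by move=> eqP [L [validL defP]]; exists L; split=> // w; rewrite -eqP. Qed.

Lemma inIdeal0 : I [::].
Proof. by exists [::]; split=> // w; rewrite ncoef0. Qed.

Lemma inIdealD P Q : I P -> I Q -> I (nadd P Q).
Proof.
move=> [L1 [valid1 def1]] [L2 [valid2 def2]]; exists (L1 ++ L2).
by rewrite all_cat valid1 valid2; split=> // w; rewrite map_cat flatten_cat !ncoefD def1 def2.
Qed.

Lemma inIdealMl A P : validpoly d A -> I P -> I (nmul A P).
Proof.
move=> validA [L [validL defP]].
exists [seq let: (a, k, z, v, b) := e in (nmul A a, k, z, v, b) | e <- L]; split.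
  rewrite all_map; apply/allP => -[[[[a k] z] v] b] /(allP validL) /=.
  by case/and5P => validAa -> -> -> ->; rewrite validpolyM.
move=> w; rewrite (ncoefM_ext (frefl _) defP) ncoef_mul_flattenr ncoef_flatten.
rewrite !big_map; apply: eq_bigr => -[[[[a k] z] v] b] _ /=.
by rewrite -ncoef_mulA; apply: ncoefM_ext => // u; rewrite ncoef_mulA.
Qed.

Lemma inIdealMr A P : validpoly d A -> I P -> I (nmul P A).
Proof.
move=> validA [L [validL defP]].
exists [seq let: (a, k, z, v, b) := e in (a, k, z, v, nmul b A) | e <- L]; split.
  rewrite all_map; apply/allP => -[[[[a k] z] v] b] /(allP validL) /=.
  by case/and5P => -> validb -> -> ->; rewrite validpolyM.
move=> w; rewrite (ncoefM_ext defP (frefl _)) ncoef_mul_flattenl ncoef_flatten.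
by rewrite !big_map; apply: eq_bigr => -[[[[a k] z] v] b] _ /=; rewrite ncoef_mulA.
Qed.

Lemma inIdealZ c P : I P -> I (nscale c P).
Proof. by rewrite nscale_mul; apply: inIdealMl. Qed.

Lemma inIdeal_sum (J : finType) (f : J -> ncpoly K gen) :
  (forall i, I (f i)) -> I (nsum f).
Proof.
move=> If; rewrite /nsum; elim: (index_enum J) => [|i r IHr] /=; first exact: inIdeal0.
exact: inIdealD.
Qed.

Lemma inIdeal_rel k z v : (k < size F)%N ->
  validT d (ldom (nth (lmap0 K) F k)) z -> validT d (lcod (nth (lmap0 K) F k)) v ->
  I (relpoly d (nth (lmap0 K) F k) z v).
Proof.
move=> ltk validz validv; exists [:: ([:: (1, [::])], k, z, v, [:: (1, [::])])].
split; first by rewrite /= ltk validz validv.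
by move=> w; rewrite /= cats0 nmul1r nmulr1.
Qed.

Lemma inTC1_valid Q : inTC1 d Q -> validpoly d Q.
Proof. by apply: sub_all => t /=; apply: sub_all => g /andP[]. Qed.

Lemma inTC1D Q Q' : inTC1 d Q -> inTC1 d Q' -> inTC1 d (nadd Q Q').
Proof. by rewrite /inTC1 all_cat => -> ->. Qed.

Lemma inTC1Z c Q : inTC1 d Q -> inTC1 d (nscale c Q).
Proof. by rewrite /inTC1 all_map. Qed.

Lemma inTC1M Q Q' : inTC1 d Q -> inTC1 d Q' -> inTC1 d (nmul Q Q').
Proof.
move=> /allP inQ /allP inQ'; apply/allP => _ /allpairsP[[a b] [Qa Q'b ->]] /=.
by rewrite all_cat inQ ?inQ'.
Qed.

Definition congrTC1 P := exists2 Q, inTC1 d Q & I (nadd P (nopp Q)).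

Lemma inTC1_congr P : inTC1 d P -> congrTC1 P.
Proof.
move=> inP; exists P => //; apply: inIdeal_ext inIdeal0 => w.
by rewrite ncoefD ncoefN ncoef0 subrr.
Qed.

Lemma congrTC1D P P' : congrTC1 P -> congrTC1 P' -> congrTC1 (nadd P P').
Proof.
move=> [Q inQ IPQ] [Q' inQ' IPQ']; exists (nadd Q Q'); first exact: inTC1D.
apply: inIdeal_ext (inIdealD IPQ IPQ') => w.
by rewrite !(ncoefD, ncoefN) opprD addrACA.
Qed.

Lemma congrTC1Z c P : congrTC1 P -> congrTC1 (nscale c P).
Proof.
move=> [Q inQ IPQ]; exists (nscale c Q); first exact: inTC1Z.
apply: inIdeal_ext (inIdealZ c IPQ) => w.
by rewrite !(ncoefD, ncoefN, ncoefZ) mulrDr mulrN.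
Qed.

Lemma congrTC1_sum (J : finType) (f : J -> ncpoly K gen) :
  (forall i, congrTC1 (f i)) -> congrTC1 (nsum f).
Proof.
move=> congr_f; rewrite /nsum; elim: (index_enum J) => [|i r IHr] /=.
  exact: inTC1_congr.
exact: congrTC1D.
Qed.

(* P P' - Q Q' = (P - Q) P' + Q (P' - Q') *)
Lemma congrTC1M P P' : validpoly d P' -> congrTC1 P -> congrTC1 P' ->
  congrTC1 (nmul P P').
Proof.
move=> validP' [Q inQ IPQ] [Q' inQ' IPQ']; exists (nmul Q Q'); first exact: inTC1M.
apply: inIdeal_ext (inIdealD (inIdealMr validP' IPQ) (inIdealMl (inTC1_valid inQ) IPQ')) => w.
rewrite !(ncoefD, ncoefN) !ncoefM -sumrN -!big_split; apply: eq_bigr => i _ /=.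
by rewrite !(ncoefD, ncoefN) mulrDl mulrDr mulNr mulrN addrA subrK.
Qed.

Lemma congrTC1_trans P P' : I (nadd P (nopp P')) -> congrTC1 P' -> congrTC1 P.
Proof.
move=> IPP' [Q inQ IP'Q]; exists Q => //; apply: inIdeal_ext (inIdealD IPP' IP'Q) => w.
by rewrite !(ncoefD, ncoefN) addrA subrK.
Qed.
End Ideal.

Section Relations.
Variables (K : pzRingType) (d : nat -> nat).

Lemma big_enumDeg_nil (f : seq bidx -> K) : \sum_(u <- enumDeg d [::]) f u = f [::].
Proof. exact: big_seq1. Qed.

Lemma big_enumDeg_cons p ps (f : seq bidx -> K) :
  \sum_(u <- enumDeg d (p :: ps)) f u =
  \sum_(i < d p) \sum_(u <- enumDeg d ps) f ((p, i : nat) :: u).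
Proof. by rewrite big_allpairs_dep -val_enum_ord big_map big_enum. Qed.

Lemma ncoef_relpoly (f : lmap K) z v w :
  ncoef (relpoly d f z v) w =
  \sum_(u <- enumDeg d (map fst z)) lmat f v u * (tword z u == w)%:R
  - \sum_(y <- enumDeg d (map fst v)) lmat f y z * (tword y v == w)%:R.
Proof.
rewrite ncoefD !ncoefE !big_map -sumrN; congr (_ + _).
by apply: eq_bigr => y _ /=; rewrite mulNr.
Qed.
End Relations.

Lemma sum_delta (R : pzRingType) n i (f : nat -> R) : (i < n)%N ->
  \sum_(j < n) (i == j)%:R * f j = f i.
Proof.
move=> lt_in; rewrite (bigD1 (Ordinal lt_in)) //= eqxx mul1r big1 ?addr0 // => j.
by rewrite -val_eqE eq_sym => /negbTE /= ->; rewrite mul0r.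
Qed.

Section GradedAlgebra.
Variables (K : fieldType) (B : algType K) (d : nat -> nat)
  (x : nat -> nat -> B) (crd : B -> nat -> nat -> K).
Hypothesis crd_lin : forall (p i : nat) (a : K) (b c : B),
  crd (a *: b + c) p i = a * crd b p i + crd c p i.
Hypothesis crd_x : forall p i q j, (i < d p)%N ->
  crd (x p i) q j = ((p == q) && (i == j))%:R.
Hypothesis x_span : forall b : B, exists N : nat,
  b = \sum_(p < N) \sum_(i < d p) crd b p i *: x p i.
Hypothesis x_mul : forall p i q j r l, (i < d p)%N -> (j < d q)%N -> r != (p + q)%N ->
  crd (x p i * x q j) r l = 0.
Hypothesis one_deg0 : forall p i, (0 < p)%N -> crd 1 p i = 0.
Hypothesis dim0 : d 0%N = 1%N.
Hypothesis gen_V : forall b : B, exists s : seq (K * seq nat),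
  all (fun t => all (fun i => (i < d 1%N)%N) t.2) s /\
  b = \sum_(t <- s) t.1 *: \prod_(i <- t.2) x 1%N i.

Lemma crd0 p i : crd 0 p i = 0.
Proof.
have := crd_lin p i 1 0 0; rewrite scaler0 addr0 mul1r => crd0_twice.
by apply: (addrI (crd 0 p i)); rewrite addr0 -crd0_twice.
Qed.

Lemma crdZ a b p i : crd (a *: b) p i = a * crd b p i.
Proof. by rewrite -[a *: b]addr0 crd_lin crd0 addr0. Qed.

Lemma crdD b c p i : crd (b + c) p i = crd b p i + crd c p i.
Proof. by have := crd_lin p i 1 b c; rewrite scale1r mul1r. Qed.

Lemma crd_sum (I : Type) (r : seq I) (P : pred I) (f : I -> B) p j :
  crd (\sum_(i <- r | P i) f i) p j = \sum_(i <- r | P i) crd (f i) p j.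
Proof. by apply: (big_morph (fun b => crd b p j)) => [b c|]; rewrite ?crdD ?crd0. Qed.

Definition homog q b := forall r j, r != q -> crd b r j = 0.

Lemma homog_expand q b : homog q b -> b = \sum_(l < d q) crd b q l *: x q l.
Proof.
move=> homb; have [N defb] := x_span b.
rewrite (bigID (fun p : 'I_N => val p == q)) /= [X in _ + X]big1 ?addr0 in defb; last first.
  by move=> p neq_pq; apply: big1 => l _; rewrite homb // scale0r.
rewrite (big_ord1_eq _ (fun p => \sum_(l < d p) crd b p l *: x p l)) in defb.
case: ifP defb => // _ b0.
by rewrite {1}b0 big1 // => l _; rewrite b0 crd0 scale0r.
Qed.

Lemma crd_mul_homog a b q r j : homog q b ->
  crd (a * b) r j = \sum_(l < d q) crd b q l * crd (a * x q l) r j.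
Proof.
move=> homb; rewrite {1}(homog_expand homb) mulr_sumr crd_sum.
by apply: eq_bigr => l _; rewrite -scalerAr crdZ.
Qed.

Lemma homog_mul p q k b : (k < d p)%N -> homog q b -> homog (p + q) (x p k * b).
Proof.
move=> lt_k homb r j neq_r; rewrite (crd_mul_homog _ _ _ homb).
by rewrite big1 // => l _; rewrite x_mul ?mulr0.
Qed.

Definition prodx (ks : seq nat) : B := \prod_(k <- ks) x 1 k.

Lemma homog_prodx ks : all (fun k => k < d 1)%N ks -> homog (size ks) (prodx ks).
Proof.
elim: ks => [_ r j|k ks IHks /andP[lt_k /IHks homks]].
  by rewrite /prodx big_nil -lt0n; apply: one_deg0.
by rewrite /prodx big_cons -/(prodx ks) /= -add1n; apply: homog_mul.
Qed.

Definition decomposable q b := exists c : nat -> nat -> K, forall j,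
  crd b q.+1 j = \sum_(k < d 1) \sum_(l < d q) c k l * crd (x 1 k * x q l) q.+1 j.

Lemma decomposable_lin q a b b' :
  decomposable q b -> decomposable q b' -> decomposable q (a *: b + b').
Proof.
move=> [c defb] [c' defb']; exists (fun k l => a * c k l + c' k l) => j.
rewrite crd_lin defb defb' mulr_sumr -big_split; apply: eq_bigr => k _.
by rewrite mulr_sumr -big_split; apply: eq_bigr => l _; rewrite mulrDl mulrA.
Qed.

Lemma decomposable_homog q b p : p != q.+1 -> homog p b -> decomposable q b.
Proof.
move=> neq_p homb; exists (fun _ _ => 0) => j; rewrite homb 1?eq_sym //.
by rewrite big1 // => k _; rewrite big1 // => l _; rewrite mul0r.
Qed.

Lemma decomposable_prodx q ks : all (fun k => k < d 1)%N ks -> decomposable q (prodx ks).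
Proof.
move=> all_ks; have [size_ks|] := eqVneq (size ks) q.+1; last first.
  by move=> neq_q; apply: decomposable_homog neq_q (homog_prodx all_ks).
case: ks size_ks all_ks => // k ks [size_ks] /andP[lt_k all_ks].
exists (fun k' l => (k == k')%:R * crd (prodx ks) q l) => j.
rewrite /prodx big_cons -/(prodx ks) (crd_mul_homog _ _ _ (homog_prodx all_ks)) size_ks.
under [RHS]eq_bigr do under eq_bigr do rewrite -mulrA.
under [RHS]eq_bigr do rewrite -mulr_sumr.
by rewrite (sum_delta (fun k' =>
  \sum_(l < d q) crd (prodx ks) q l * crd (x 1 k' * x q l) q.+1 j)).
Qed.

Lemma decomposable_all q b : decomposable q b.
Proof.
have [s [all_s ->]] := gen_V b; elim: s all_s => [_|t s IHs /andP[all_t /IHs dec_s]].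
  by rewrite big_nil; apply: (@decomposable_homog _ _ 0) => // r j _; rewrite crd0.
by rewrite big_cons; apply: decomposable_lin dec_s; apply: decomposable_prodx.
Qed.

Lemma dual_products q i : (i < d q.+1)%N -> exists c : nat -> nat -> K, forall j,
  \sum_(k < d 1) \sum_(l < d q) c k l * crd (x 1 k * x q l) q.+1 j = (i == j)%:R.
Proof.
move=> lt_i; have [c defc] := decomposable_all q (x q.+1 i).
by exists c => j; rewrite -defc crd_x // eqxx.
Qed.

Lemma crd1_00 : crd 1 0 0 != 0.
Proof.
have hom1 : homog 0 1 by move=> r j; rewrite -lt0n; apply: one_deg0.
have := homog_expand hom1; rewrite dim0 big_ord1 /= => def1.
apply/eqP => crd1_0; have := @crd_x 0 0 0 0; rewrite dim0 => /(_ isT).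
rewrite -[x 0 0]mul1r def1 crd1_0 scale0r mul0r crd0 => /eqP.
by rewrite eq_sym oner_eq0.
Qed.

Local Notation F := [:: unit_lmap crd; mult_lmap x crd].

Lemma congr_gen0 : congrTC1 d F (nword [:: (0, 0, 0)]%N).
Proof.
(* The unit relation at ([::], x^(0)_0) is crd 1 0 0 * (1 - t^(0)_0^0). *)
have rel_unit : inIdeal d F (relpoly d (unit_lmap crd) [::] [:: (0, 0)]%N).
  by apply: (@inIdeal_rel _ _ _ 0); rewrite /validT /validX //= dim0.
apply: (congrTC1_trans (P' := nword [::])); last exact: inTC1_congr.
apply: inIdeal_ext (inIdealZ (- (crd 1 0 0)^-1) rel_unit) => w.
rewrite ncoefZ ncoef_relpoly big_enumDeg_nil big_enumDeg_cons dim0 big_ord1.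
rewrite big_enumDeg_nil ncoefD ncoefN !ncoef_word /=.
by rewrite mulrBr !mulrA mulNr mulVf ?crd1_00 // !mulN1r opprK addrC.
Qed.

Lemma ncoef_mult_rel q k l j w :
  ncoef (relpoly d (mult_lmap x crd) [:: (1, k); (q, l)] [:: (q.+1, j)])%N w =
  \sum_(a < d 1) \sum_(b < d q)
     crd (x 1 a * x q b) q.+1 j * ([:: (1, k, a : nat); (q, l, b : nat)]%N == w)%:R
  - \sum_(j' < d q.+1) crd (x 1 k * x q l) q.+1 j' * ([:: (q.+1, j' : nat, j)] == w)%:R.
Proof.
rewrite ncoef_relpoly !big_enumDeg_cons; congr (_ - _); apply: eq_bigr => a _.
  by rewrite big_enumDeg_cons; apply: eq_bigr => b _; rewrite big_enumDeg_nil.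
by rewrite big_enumDeg_nil.
Qed.

Lemma congr_gen_succ q :
  (forall l b, (l < d q)%N -> (b < d q)%N -> congrTC1 d F (nword [:: (q, l, b)])) ->
  forall i j, (i < d q.+1)%N -> (j < d q.+1)%N -> congrTC1 d F (nword [:: (q.+1, i, j)]).
Proof.
move=> IHq i j lt_i lt_j; have [c dual_c] := dual_products lt_i.
pose quad (k l : nat) := nsum (fun a : 'I_(d 1) => nsum (fun b : 'I_(d q) =>
  nscale (crd (x 1 a * x q b) q.+1 j) (nword [:: (1, k, a : nat); (q, l, b : nat)]%N))).
pose T := nsum (fun k : 'I_(d 1) => nsum (fun l : 'I_(d q) => nscale (c k l) (quad k l))).
pose R := nsum (fun k : 'I_(d 1) => nsum (fun l : 'I_(d q) =>
  nscale (c k l)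
    (relpoly d (mult_lmap x crd) [:: (1, k : nat); (q, l : nat)] [:: (q.+1, j)])%N)).
have IR : inIdeal d F R.
  apply: inIdeal_sum => k; apply: inIdeal_sum => l; apply: inIdealZ.
  by apply: (@inIdeal_rel _ _ _ 1); rewrite /validT /validX /= ?ltn_ord ?lt_j.
(* Summing the multiplication relations with the coefficients c leaves T - t^(q+1)_i^j. *)
apply: (congrTC1_trans (P' := T)).
  apply: inIdeal_ext (inIdealZ (-1) IR) => w.
  have sum_gen : \sum_(k < d 1) \sum_(l < d q) c k l * \sum_(j' < d q.+1)
      crd (x 1 k * x q l) q.+1 j' * ([:: (q.+1, j' : nat, j)] == w)%:R
      = ([:: (q.+1, i, j)] == w)%:R.
    under eq_bigr do under eq_bigr do rewrite mulr_sumr.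
    under eq_bigr do rewrite exchange_big /=; rewrite exchange_big /=.
    under eq_bigr do under eq_bigr do under eq_bigr do rewrite mulrA.
    under eq_bigr do under eq_bigr do rewrite -mulr_suml.
    under eq_bigr do rewrite -mulr_suml dual_c.
    exact: (sum_delta (fun j' => ([:: (q.+1, j', j)] == w)%:R)).
  rewrite ncoefZ ncoefD ncoefN ncoef_word -sum_gen !ncoef_sum mulN1r -opprB.
  congr (- _); rewrite -sumrB; apply: eq_bigr => k _; rewrite !ncoef_sum -sumrB.
  apply: eq_bigr => l _; rewrite !ncoefZ ncoef_mult_rel mulrBr; congr (_ * _ - _).
  by rewrite ncoef_sum; apply: eq_bigr => a _; rewrite ncoef_sum; apply: eq_bigr => b _;
    rewrite ncoefZ ncoef_word.
apply: congrTC1_sum => k; apply: congrTC1_sum => l; apply: congrTC1Z.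
apply: congrTC1_sum => a; apply: congrTC1_sum => b; apply: congrTC1Z.
rewrite (@nword_cat _ _ [:: _] [:: _]); apply: congrTC1M.
- by rewrite /validpoly /validG /= !ltn_ord.
- by apply: inTC1_congr; rewrite /inTC1 /validG /= !ltn_ord.
exact: IHq.
Qed.

Lemma congr_gen g : validG d g -> congrTC1 d F (nword [:: g]).
Proof.
case: g => [[p i] j]; rewrite /validG /=; elim: p i j => [|q IHq] i j.
  by rewrite dim0 !ltnS !leqn0 => /andP[/eqP-> /eqP->]; apply: congr_gen0.
by case/andP; apply: congr_gen_succ => l b lt_l lt_b; apply: IHq; rewrite lt_l.
Qed.

Lemma congr_word w : all (validG d) w -> congrTC1 d F (nword w).
Proof.
elim: w => [|g w IHw] /=; first by move=> _; apply: inTC1_congr.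
case/andP=> valid_g valid_w.
rewrite -[g :: w]cat1s nword_cat; apply: congrTC1M; last exact: IHw.
  by rewrite /validpoly /= valid_w.
exact: congr_gen.
Qed.

Lemma congr_valid P : validpoly d P -> congrTC1 d F P.
Proof.
elim: P => [_|t P IHP /andP[valid_t /IHP congrP]]; first exact: inTC1_congr.
apply: (congrTC1D (P := [:: t])) congrP.
have -> : [:: t] = nscale t.1 (nword t.2) by rewrite /nscale /= mulr1 -surjective_pairing.
by apply: congrTC1Z; apply: congr_word.
Qed.
End GradedAlgebra.

Theorem mainTheorem5 (K : fieldType) (B : algType K) (d : nat -> nat)
  (x : nat -> nat -> B) (crd : B -> nat -> nat -> K)
  (* crd b p i is the coordinate of b on x^(p)_i: linear, ... *)
  (crd_lin : forall (p i : nat) (a : K) (b c : B),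
      crd (a *: b + c) p i = a * crd b p i + crd c p i)
  (* ... dual to the basis x ... *)
  (crd_x : forall p i q j, (i < d p)%N ->
      crd (x p i) q j = ((p == q) && (i == j))%:R)
  (* ... and x spans B: B = (+)_p B_p with basis x^(p)_i (i < d p) of B_p *)
  (x_span : forall b : B, exists N : nat,
      b = \sum_(p < N) \sum_(i < d p) crd b p i *: x p i)
  (* graded algebra: B_p B_q <= B_{p+q} *)
  (x_mul : forall p i q j r l, (i < d p)%N -> (j < d q)%N -> r != (p + q)%N ->
      crd (x p i * x q j) r l = 0)
  (* connected: 1 in B_0 and B_0 = k *)
  (one_deg0 : forall p i, (0 < p)%N -> crd 1 p i = 0)
  (dim0 : d 0%N = 1%N)
  (* generated by V = B_1 *)
  (gen_V : forall b : B, exists s : seq (K * seq nat),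
      all (fun t => all (fun i => (i < d 1%N)%N) t.2) s /\
      b = \sum_(t <- s) t.1 *: \prod_(i <- t.2) x 1%N i) :
  forall P : ncpoly K gen, validpoly d P ->
    exists Q : ncpoly K gen,
      inTC1 d Q /\
      inIdeal d [:: unit_lmap crd; mult_lmap x crd] (nadd P (nopp Q)).
Proof.
move=> P validP.
have [Q inQ congrPQ] := congr_valid crd_lin crd_x x_span x_mul one_deg0 dim0 gen_V validP.
by exists Q.
Qed.
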